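(* Let $\boldsymbol g_1,\dots,\boldsymbol g_m\in\mathbb{Z}[X^{\pm}]^K$, let $\mathcal{M}_{\mathbb{Z}}=\sum_j\mathbb{Z}[X^{\pm}]\boldsymbol g_j$ and $\mathcal{M}=\sum_j\mathbb{R}[X^{\pm}]\boldsymbol g_j$, and let $a_1,\dots,a_K\in\mathbb{Z}^n$ and $I,J\subseteq\{1,\dots,K\}$. Then there exists $\widetilde{\boldsymbol f}\in\mathcal{M}_{\mathbb{Z}}\cap(\mathbb{N}[X^{\pm}]\setminus\{0\})^K$ satisfying $$(O_v\cup J)\cap M_v(I,\boldsymbol f)\neq\emptyset\quad\text{for every }v\in\mathbb{R}^n\setminus\{0\}\qquad(\ast)$$ if and only if there exists $\boldsymbol f\in\mathcal{M}\cap(\mathbb{R}_{\ge0}[X^{\pm}]\setminus\{0\})^K$ satisfying $(\ast)$.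
   Context: $R[X^{\pm}]=R[X_1^{\pm1},\dots,X_n^{\pm1}]$, $X^b=X_1^{b_1}\cdots X_n^{b_n}$. For $f=\sum c_bX^b\neq0$ and $v\in\mathbb{R}^n\setminus\{0\}$, $\deg_v(f)=\max\{v\cdot b:c_b\ne0\}$, $\deg_v(0)=-\infty$. $M_v(I,\boldsymbol f)=\{i\in I:\deg_v(f_i)=\max_{i'\in I}\deg_v(f_{i'})\}$; $O_v=\{i\in\{1,\dots,K\}:a_i\not\perp v\}$. *)

From HB Require Import structures.
From mathcomp Require Import all_boot all_order all_algebra.
From mathcomp Require Import reals constructive_ereal.
Set Implicit Arguments. Unset Strict Implicit. Unset Printing Implicit Defensive.
Import Order.TTheory GRing.Theory Num.Theory.
Local Open Scope ring_scope.

(* A Laurent polynomial in n variables with coefficients in R is represented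
   by a finite list of (exponent, coefficient) terms; the exponent b ∈ Z^n is
   a row vector of integers, and the polynomial is sum_(term) c X^b.
   Equality of Laurent polynomials is equality of all coefficients. *)
Definition lpoly (R : Type) (n : nat) := seq ('rV[int]_n * R).

Definition lcoef (R : nmodType) (n : nat) (p : lpoly R n) (b : 'rV[int]_n) : R :=
  \sum_(x <- p | x.1 == b) x.2.

Definition lmul (R : pzRingType) (n : nat) (p q : lpoly R n) : lpoly R n :=
  [seq (x.1 + y.1, x.2 * y.2) | x <- p, y <- q].

Definition lmap (R : pzRingType) (n : nat) (p : lpoly int n) : lpoly R n :=
  [seq (x.1, x.2%:~R) | x <- p].

Definition lnonzero (R : nmodType) (n : nat) (p : lpoly R n) : Prop :=
  exists b, lcoef p b != 0.

Definition lnonneg (R : numDomainType) (n : nat) (p : lpoly R n) : Prop :=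
  forall b, 0 <= lcoef p b.

Definition in_module (R : pzRingType) (n K m : nat)
    (g : 'I_m -> 'I_K -> lpoly R n) (f : 'I_K -> lpoly R n) : Prop :=
  exists h : 'I_m -> lpoly R n, forall (k : 'I_K) (b : 'rV[int]_n),
    lcoef (f k) b = lcoef (flatten [seq lmul (h j) (g j k) | j <- enum 'I_m]) b.

Definition dotv (R : realType) (n : nat) (v : 'rV[R]_n) (b : 'rV[int]_n) : R :=
  \sum_(i < n) v ord0 i * (b ord0 i)%:~R.

Definition degv (R : realType) (n : nat) (v : 'rV[R]_n) (p : lpoly R n) : \bar R :=
  \big[Order.max/-oo%E]_(x <- p | lcoef p x.1 != 0) (dotv v x.1)%:E.

Definition Mv (R : realType) (n K : nat) (v : 'rV[R]_n) (I : {set 'I_K})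
    (f : 'I_K -> lpoly R n) : {set 'I_K} :=
  [set i in I | degv v (f i) == \big[Order.max/-oo%E]_(i' in I) degv v (f i')].

Definition Ov (R : realType) (n K : nat) (v : 'rV[R]_n) (a : 'I_K -> 'rV[int]_n)
  : {set 'I_K} := [set i | dotv v (a i) != 0].

Definition star_cond (R : realType) (n K : nat) (a : 'I_K -> 'rV[int]_n)
    (I J : {set 'I_K}) (f : 'I_K -> lpoly R n) : Prop :=
  forall v : 'rV[R]_n, v != 0 -> (Ov v a :|: J) :&: Mv v I f != set0.

From HB Require Import structures.
From mathcomp Require Import all_boot all_order all_algebra.
From mathcomp Require Import reals constructive_ereal.
From mathcomp Require Import lra.
Set Implicit Arguments. Unset Strict Implicit. Unset Printing Implicit Defensive.
Import Order.TTheory GRing.Theory Num.Theory.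
Local Open Scope ring_scope.

(* Condition ( * ) only depends on the supports of the polynomials f_k, since
   deg_v(f) is a maximum over the support of f.  An integral solution is a real
   one, so the content is the converse: given f = sum_j h_j g_j with real h_j
   and nonnegative coefficients, find integral h'_j such that
   f' = sum_j h'_j g_j has nonnegative coefficients and the same support as f.

   Writing the (finitely many) coefficients of the h_j as unknowns c_t, every
   coefficient of every f_k is an integral linear form in c, and only finitely
   many of these forms are not identically zero.  The heart of the proof is a
   sign-pattern lemma: if c is a real vector with c A >= 0 for an integral
   matrix A, there is an integral z with z A >= 0 and the same zero entries.
   Indeed c lies in the real span of the rational solutions of the rational
   system "x A_r = 0 for the columns r where c A vanishes"; a rational
   approximation of the coefficients of c in that span keeps the other entries
   of c A positive, and clearing denominators makes it integral. *)

Lemma finite_pos_lower_bound (R : realDomainType) (T : finType) (v : T -> R)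
    (P : pred T) :
  (forall r, P r -> 0 < v r) -> exists2 e : R, 0 < e & forall r, P r -> e <= v r.
Proof.
move=> v_gt0; exists (\big[Num.min/1]_(r | P r) v r).
  by apply: (big_ind (fun x => 0 < x)) => // x y x0 y0; rewrite lt_min x0 y0.
by move=> r Pr; rewrite (bigD1 r) //= ge_min lexx.
Qed.

Lemma rat_approx_row (R : archiRealFieldType) (N : nat) (w : 'rV[R]_N) (del : R) :
  0 < del -> exists wq : 'rV[rat]_N, forall i, `|ratr (wq 0 i) - w 0 i| < del.
Proof.
move=> del0.
have approx i : exists q : rat, `|ratr q - w 0 i| < del.
  have [|q] := @rat_in_itvoo R (w 0 i - del) (w 0 i + del).
    by rewrite ltrD2l gtrN.
  rewrite in_itv /= => /andP[lo hi]; exists q.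
  by rewrite ltr_norml; apply/andP; split; lra.
have [wq Hwq] := @fin_all_exists _ (fun _ => rat) _ approx.
by exists (\row_i wq i) => i; rewrite mxE.
Qed.

Lemma row_mulmx_bound (R : numDomainType) (N p : nat) (e : 'rV[R]_N)
    (B : 'M[R]_(N, p)) (del : R) (r : 'I_p) :
  (forall i, `|e 0 i| <= del) -> `|(e *m B) 0 r| <= del * \sum_i `|B i r|.
Proof.
move=> e_small; rewrite mxE; apply: le_trans (ler_norm_sum _ _ _) _.
rewrite mulr_sumr; apply: ler_sum => i _; rewrite normrM.
by apply: ler_wpM2r; [exact: normr_ge0 | exact: e_small].
Qed.

Lemma rational_coords_perturbation (R : numFieldType) (N p : nat)
    (wq : 'rV[rat]_N) (w : 'rV[R]_N) (P : 'M[rat]_(N, p)) (del : R) (r : 'I_p) :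
  (forall i, `|ratr (wq 0 i) - w 0 i| <= del) ->
  `|ratr ((wq *m P) 0 r) - (w *m map_mx ratr P) 0 r|
    <= del * \sum_i `|map_mx ratr P i r|.
Proof.
move=> close.
have -> : ratr ((wq *m P) 0 r) = (map_mx ratr wq *m map_mx ratr P) 0 r :> R.
  by rewrite -map_mxM [RHS]mxE.
have -> : forall X Y : 'rV[R]_p, X 0 r - Y 0 r = (X - Y) 0 r.
  by move=> X Y; rewrite !mxE.
by rewrite -mulmxBl; apply: row_mulmx_bound => i; rewrite !mxE.
Qed.

Lemma rational_kernel_cover (R : numFieldType) (N p : nat) (c : 'rV[R]_N)
    (A : 'M[rat]_(N, p)) (Z : pred 'I_p) :
  (forall r, Z r -> (c *m map_mx ratr A) 0 r = 0) ->
  exists2 KQ : 'M[rat]_N, (forall (x : 'rV[rat]_N) r, Z r -> (x *m KQ *m A) 0 r = 0)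
    & exists w, c = w *m map_mx ratr KQ.
Proof.
move=> cZ; pose d : 'rV[rat]_p := \row_r (Z r)%:R.
pose AZ := A *m diag_mx d.
have AZ_col (X : 'M[rat]_(1, N)) r : (X *m AZ) 0 r = (X *m A) 0 r * (Z r)%:R.
  by rewrite mulmxA mul_mx_diag !mxE.
exists (kermx AZ).
  move=> x r Zr; have := congr1 (fun X => (x *m X) 0 r) (mulmx_ker AZ).
  by rewrite mulmxA AZ_col Zr mulr1 mulmx0 => ->; rewrite mxE.
have /sub_kermxP : (c *m map_mx ratr AZ = 0).
  apply/rowP => r; rewrite map_mxM map_diag_mx mulmxA mul_mx_diag mxE.
  have [/cZ ->|nZr] := boolP (Z r); first by rewrite mul0r mxE.
  by rewrite !mxE (negbTE nZr) rmorph0 mulr0.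
by rewrite -map_kermx => /submxP[w ->]; exists w.
Qed.

Lemma rational_sign_pattern (R : archiRealFieldType) (N p : nat) (c : 'rV[R]_N)
    (A : 'M[int]_(N, p)) :
  (forall r, 0 <= (c *m map_mx intr A) 0 r) ->
  exists c' : 'rV[rat]_N, forall r,
    ((c' *m map_mx intr A) 0 r == 0) = ((c *m map_mx intr A) 0 r == 0)
    /\ 0 <= (c' *m map_mx intr A) 0 r.
Proof.
move=> c_ge0; set AR : 'M[R]_(N, p) := map_mx intr A.
set AQ : 'M[rat]_(N, p) := map_mx intr A.
have AQR : map_mx ratr AQ = AR by apply/matrixP => i j; rewrite !mxE ratr_int.
have [|KQ KQ0 [w def_c]] :=
  @rational_kernel_cover R N p c AQ (fun r => (c *m AR) 0 r == 0).
  by move=> r /eqP; rewrite AQR.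
have [eps eps0 eps_le] : exists2 eps : R, 0 < eps &
    forall r, (c *m AR) 0 r != 0 -> eps <= (c *m AR) 0 r.
  by apply: finite_pos_lower_bound => r nz; rewrite lt_neqAle eq_sym nz c_ge0.
pose B : 'M[R]_(N, p) := map_mx ratr (KQ *m AQ); pose M := \sum_r \sum_i `|B i r|.
have cB : c *m AR = w *m B by rewrite def_c /B map_mxM AQR mulmxA.
have M_ge0 : 0 <= M by do 2!(apply: sumr_ge0 => ? _).
have M1_gt0 : 0 < M + 1 by rewrite ltr_wpDl.
pose del := eps / (M + 1).
have del0 : 0 < del by rewrite divr_gt0.
have delM : del * M < eps.
  by rewrite /del mulrAC ltr_pdivrMr // ltr_pM2l // ltrDl.
have [wq wq_approx] := rat_approx_row w del0.
exists (wq *m KQ) => r.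
have [z0|nz] := eqVneq ((c *m AR) 0 r) 0.
  by rewrite (KQ0 wq r) /= ?z0 ?eqxx ?lexx.
have pert : `|ratr ((wq *m KQ *m AQ) 0 r) - (c *m AR) 0 r| <= del * M.
  have close i : `|ratr (wq 0 i) - w 0 i| <= del by exact: ltW.
  rewrite -mulmxA cB.
  apply: le_trans (rational_coords_perturbation (KQ *m AQ) r close) _.
  rewrite ler_pM2l // /M (bigD1 r) //= lerDl.
  by apply: sumr_ge0 => ? _; apply: sumr_ge0.
have pos : 0 < (wq *m KQ *m AQ) 0 r.
  rewrite -(ltr0q R); have := eps_le r nz.
  by move: pert; rewrite ler_norml => /andP[lo _] ?; lra.
by rewrite gt_eqF // ltW.
Qed.

Lemma clear_denominators (N : nat) (c : 'rV[rat]_N) :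
  exists2 D : int, 0 < D & exists z : 'I_N -> int,
    forall i, (z i)%:~R = c 0 i * D%:~R.
Proof.
pose D : int := \prod_i denq (c 0 i).
exists D; first by apply: prodr_gt0 => i _; exact: denq_gt0.
exists (fun i => numq (c 0 i) * \prod_(j | j != i) denq (c 0 j)) => i.
rewrite /D [in RHS](bigD1 i) //= !rmorphM /= mulrA; congr (_ * _).
by rewrite -{2}(divq_num_den (c 0 i)) divfK // intr_eq0 denq_neq0.
Qed.

Lemma integer_sign_pattern (R : archiRealFieldType) (T C : finType)
    (A : C -> T -> int) (c : T -> R) :
  (forall r, 0 <= \sum_t c t * (A r t)%:~R) ->
  exists z : T -> int, forall r,
    ((\sum_t z t * A r t == 0) = (\sum_t c t * (A r t)%:~R == 0))
    /\ 0 <= \sum_t z t * A r t.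
Proof.
move=> c_ge0.
pose cm : 'rV[R]_#|T| := \row_i c (enum_val i).
pose Am : 'M[int]_(#|T|, #|C|) := \matrix_(i, j) A (enum_val j) (enum_val i).
have Ec j : (cm *m map_mx intr Am) 0 j = \sum_t c t * (A (enum_val j) t)%:~R.
  by rewrite mxE (big_enum_val (A := T)); apply: eq_bigr => i _; rewrite !mxE.
have [|c' Hc'] := @rational_sign_pattern R _ _ cm Am.
  by move=> j; rewrite Ec.
have [D D_gt0 [zm Ezm]] := clear_denominators c'.
exists (fun t => zm (enum_rank t)) => r.
have Er : (\sum_t zm (enum_rank t) * A r t)%:~R
    = (c' *m map_mx intr Am) 0 (enum_rank r) * D%:~R :> rat.
  rewrite (big_enum_val (A := T)) rmorph_sum mxE mulr_suml.
  apply: eq_bigr => i _.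
  by rewrite enum_valK !mxE enum_rankK rmorphM /= Ezm mulrAC.
have [same_zero ge0] := Hc' (enum_rank r).
rewrite Ec enum_rankK in same_zero; rewrite -same_zero.
have D_pos : (0 : rat) < D%:~R by rewrite ltr0z.
split; first by rewrite -(intr_eq0 rat) Er mulf_eq0 (gt_eqF D_pos) orbF.
by rewrite -(ler0z rat) Er mulr_ge0 // ltW.
Qed.

Definition lcomb (R : pzRingType) (n m : nat) (h G : 'I_m -> lpoly R n)
  : lpoly R n := flatten [seq lmul (h j) (G j) | j <- enum 'I_m].

Lemma lcoef_lmap (R : pzRingType) (n : nat) (p : lpoly int n) (b : 'rV[int]_n) :
  lcoef (lmap R p) b = (lcoef p b)%:~R.
Proof. by rewrite /lcoef /lmap big_map rmorph_sum. Qed.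

Lemma lcoef_lmul (R : pzRingType) (n : nat) (p q : lpoly R n) (b : 'rV[int]_n) :
  lcoef (lmul p q) b = \sum_(x <- p) x.2 * lcoef q (b - x.1).
Proof.
elim: p => [|x p IH]; first by rewrite /lcoef /lmul !big_nil.
rewrite big_cons -IH /lcoef /lmul /= big_cat big_map /=; congr (_ + _).
rewrite big_mkcond [in RHS]big_mkcond mulr_sumr; apply: eq_bigr => y _ /=.
have -> : (x.1 + y.1 == b) = (y.1 == b - x.1).
  by apply/eqP/eqP => [<-|->]; [rewrite addrC addKr | rewrite addrC subrK].
by case: ifP; rewrite ?mulr0.
Qed.

Lemma lcoef_lcomb (R : pzRingType) (n m : nat) (h G : 'I_m -> lpoly R n)
    (b : 'rV[int]_n) :
  lcoef (lcomb h G) b = \sum_(j < m) \sum_(x <- h j) x.2 * lcoef (G j) (b - x.1).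
Proof.
rewrite {1}/lcoef big_flatten big_map big_enum /=; apply: eq_big => // j _.
by rewrite -lcoef_lmul.
Qed.

Lemma in_module_lmap (R : pzRingType) (n K m : nat)
    (g : 'I_m -> 'I_K -> lpoly int n) (f : 'I_K -> lpoly int n) :
  in_module g f -> in_module (fun j k => lmap R (g j k)) (fun k => lmap R (f k)).
Proof.
move=> [h def_f]; exists (fun j => lmap R (h j)) => k b.
rewrite lcoef_lmap def_f -/(lcomb _ _) !lcoef_lcomb rmorph_sum.
apply: eq_bigr => j _; rewrite rmorph_sum /lmap big_map.
by apply: eq_bigr => x _; rewrite rmorphM lcoef_lmap.
Qed.

Lemma lcoef_neq0_mem (V : nmodType) (n : nat) (p : lpoly V n) (b : 'rV[int]_n) :
  lcoef p b != 0 -> exists2 y, y \in p & y.1 = b.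
Proof.
have [/hasP[y yp /eqP <-]|/hasPn nob] := boolP (has (fun y => y.1 == b) p).
  by exists y.
by rewrite /lcoef big1_seq ?eqxx // => y /andP[yb /nob]; rewrite yb.
Qed.

Lemma degv_support_le (R : realType) (n : nat) (v : 'rV[R]_n) (p q : lpoly R n) :
  (forall b, lcoef p b != 0 -> lcoef q b != 0) -> (degv v p <= degv v q)%O.
Proof.
move=> supp_pq; rewrite /degv big_seq_cond.
apply: (big_ind (fun x => x <= _)%O) => [|x y hx hy|x /andP[_ nz]].
- exact: leNye.
- by rewrite ge_max hx hy.
have qx := supp_pq _ nz; have [y yq ey] := lcoef_neq0_mem qx.
rewrite -ey; apply: (le_bigmax_seq _ _ _ (fun y => (dotv v y.1)%:E)) => //=.
by rewrite ey.
Qed.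

Lemma star_cond_support (R : realType) (n K : nat) (a : 'I_K -> 'rV[int]_n)
    (I J : {set 'I_K}) (F G : 'I_K -> lpoly R n) :
  (forall k b, (lcoef (F k) b != 0) = (lcoef (G k) b != 0)) ->
  star_cond a I J F -> star_cond a I J G.
Proof.
move=> same_supp starF v v0.
have E k : degv v (F k) = degv v (G k).
  by apply/eqP; rewrite eq_le !degv_support_le // => b; rewrite same_supp.
have Emax : \big[Order.max/-oo%E]_(i in I) degv v (F i) =
    \big[Order.max/-oo%E]_(i in I) degv v (G i) by apply: eq_bigr.
have -> : Mv v I G = Mv v I F by apply/setP => i; rewrite !inE E Emax.
exact: starF.
Qed.

Lemma sum_pad (V : nmodType) (X : Type) (x0 : X) (s : seq X) (S : nat)
    (F : X -> V) :
  (size s <= S)%N -> F x0 = 0 -> \sum_(x <- s) F x = \sum_(i < S) F (nth x0 s i).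
Proof.
move=> s_le F0; rewrite (big_nth x0) -(big_mkord xpredT (fun i => F (nth x0 s i))).
rewrite (@big_cat_nat _ _ _ (size s) 0 S _ _ (leq0n _) s_le) /=.
rewrite [X in _ + X]big_nat_cond [X in _ + X]big1 ?addr0 //.
by move=> i /andP[/andP[si _] _]; rewrite nth_default.
Qed.

(* Integral realization of a nonnegative real combination sum_j h_j g_j of
   integral vectors g_j: the unknowns are the coefficients of the terms of
   the h_j, and each coefficient of the combination is an integral linear
   form in them. *)
Section IntegralRealization.

Variables (R : archiRealFieldType) (n K m : nat).
Variables (g : 'I_m -> 'I_K -> lpoly int n) (h : 'I_m -> lpoly R n).

Definition hlen : nat := \max_(j < m) size (h j).
Definition term_index : finType := ('I_m * 'I_hlen)%type.
Definition hterm (t : term_index) : 'rV[int]_n * R := nth (0, 0) (h t.1) t.2.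

(* Integral coefficient of the unknown attached to the term t in the
   coefficient of X^b in the k-th component of the combination. *)
Definition coef_form (k : 'I_K) (b : 'rV[int]_n) (t : term_index) : int :=
  lcoef (g t.1 k) (b - (hterm t).1).

Definition int_multiplier (z : term_index -> int) (j : 'I_m) : lpoly int n :=
  [seq ((hterm (j, i)).1, z (j, i)) | i <- enum 'I_hlen].

Lemma real_coef_form (k : 'I_K) (b : 'rV[int]_n) :
  lcoef (lcomb h (fun j => lmap R (g j k))) b
  = \sum_t (hterm t).2 * (coef_form k b t)%:~R.
Proof.
rewrite lcoef_lcomb -(pair_big xpredT xpredT (fun j i =>
  (hterm (j, i)).2 * (coef_form k b (j, i))%:~R)) /=.
apply: eq_bigr => j _.
rewrite (@sum_pad _ _ (0, 0) _ hlen
  (fun x => x.2 * lcoef (lmap R (g j k)) (b - x.1))).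
- by apply: eq_bigr => i _; rewrite lcoef_lmap.
- exact: (@leq_bigmax _ (fun j => size (h j)) j).
- by rewrite /= mul0r.
Qed.

Lemma int_coef_form (z : term_index -> int) (k : 'I_K) (b : 'rV[int]_n) :
  lcoef (lcomb (int_multiplier z) (fun j => g j k)) b
  = \sum_t z t * coef_form k b t.
Proof.
rewrite lcoef_lcomb
  (eq_bigr (fun j => \sum_(i < hlen) z (j, i) * coef_form k b (j, i))).
  by rewrite pair_bigA; apply: eq_bigr => -[j i].
by move=> j _; rewrite big_map big_enum.
Qed.

(* The exponents at which some coefficient form is nonzero are finitely many:
   each is an exponent of some h_j plus an exponent of some g_jk. *)
Definition glen : nat := \max_(j < m) \max_(k < K) size (g j k).
Definition constraint : finType := ('I_K * (term_index * 'I_glen))%type.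
Definition constraint_exp (r : constraint) : 'rV[int]_n :=
  (hterm r.2.1).1 + (nth (0, 0) (g r.2.1.1 r.1) r.2.2).1.

Lemma coef_form_support (k : 'I_K) (b : 'rV[int]_n) (t : term_index) :
  coef_form k b t != 0 -> exists r : constraint, r.1 = k /\ constraint_exp r = b.
Proof.
move=> nz; have [y yg ey] := lcoef_neq0_mem nz.
have size_le : (size (g t.1 k) <= glen)%N.
  apply: leq_trans (@leq_bigmax _ (fun k0 => size (g t.1 k0)) k) _.
  exact: (@leq_bigmax _ (fun j => \max_(k0 < K) size (g j k0)) t.1).
have y_lt : (index y (g t.1 k) < glen)%N.
  by rewrite (leq_trans _ size_le) ?index_mem.
exists (k, (t, Ordinal y_lt)); split => //.
by rewrite /constraint_exp /= nth_index // ey addrC subrK.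
Qed.

Lemma integral_realization :
  (forall k b, 0 <= lcoef (lcomb h (fun j => lmap R (g j k))) b) ->
  exists z : term_index -> int, forall k b,
    ((lcoef (lcomb (int_multiplier z) (fun j => g j k)) b == 0)
      = (lcoef (lcomb h (fun j => lmap R (g j k))) b == 0))
    /\ 0 <= lcoef (lcomb (int_multiplier z) (fun j => g j k)) b.
Proof.
move=> comb_ge0.
have [|z Hz] := @integer_sign_pattern R _ _
  (fun r : constraint => coef_form r.1 (constraint_exp r)) (fun t => (hterm t).2).
  by move=> r; rewrite -real_coef_form.
exists z => k b; rewrite int_coef_form real_coef_form.
have [/existsP[t /coef_form_support[r [<- <-]]]|/existsPn all0] :=
  boolP [exists t, coef_form k b t != 0]; first exact: Hz.
by rewrite !big1 ?eqxx // => t _; rewrite (eqP (negPn (all0 t))) ?mulr0z mulr0.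
Qed.

End IntegralRealization.

Theorem mainTheorem8 (R : realType) (n K m : nat)
    (g : 'I_m -> 'I_K -> lpoly int n) (a : 'I_K -> 'rV[int]_n)
    (I J : {set 'I_K}) :
  (exists ft : 'I_K -> lpoly int n,
      in_module g ft /\
      (forall k, lnonneg (ft k) /\ lnonzero (ft k)) /\
      star_cond a I J (fun k => lmap R (ft k)))
  <->
  (exists f : 'I_K -> lpoly R n,
      in_module (fun j k => lmap R (g j k)) f /\
      (forall k, lnonneg (f k) /\ lnonzero (f k)) /\
      star_cond a I J f).
Proof.
split.
  move=> [ft [ft_mod [ft_sign ft_star]]].
  exists (fun k => lmap R (ft k)); split; first exact: in_module_lmap.
  split=> // k; have [ft_ge0 [b ft_b]] := ft_sign k; split.
    by move=> b'; rewrite lcoef_lmap ler0z.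
  by exists b; rewrite lcoef_lmap intr_eq0.
move=> [f [[h def_f] [f_sign f_star]]].
have [|z Hz] := @integral_realization R n K m g h.
  by move=> k b; rewrite -def_f; case: (f_sign k).
pose ft k := lcomb (int_multiplier z) (fun j => g j k).
exists ft; split; first by exists (int_multiplier z).
split=> [k|].
  have [_ [b f_b]] := f_sign k; split=> [b'|]; first by case: (Hz k b').
  by exists b; case: (Hz k b) => -> _; rewrite -def_f.
apply: star_cond_support f_star => k b.
by rewrite lcoef_lmap intr_eq0 def_f; case: (Hz k b) => ->.
Qed.
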